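(* Let $V$ be an infinite-dimensional vector space over a field $\mathbb{F}$, let $\lambda\in\mathbb{F}$, and let $p_1,p_2,p_3\in\mathbb{F}[t]$ be split polynomials of degree $2$. Then $\lambda\,\mathrm{id}_V$ is a $(p_1,p_2,p_3)$-sum if and only if $\lambda$ is a $(p_1,p_2,p_3)$-sum or $2\lambda=\operatorname{tr}p_1+\operatorname{tr}p_2+\operatorname{tr}p_3$.
   Context: An endomorphism $u$ is a $(p_1,p_2,p_3)$-sum if $u=u_1+u_2+u_3$ for some endomorphisms $u_k$ of $V$ with $p_k(u_k)=0$ for all $k$. A scalar $\lambda$ is a $(p_1,p_2,p_3)$-sum if $\lambda=x_1+x_2+x_3$ with $x_k\in\mathbb{F}$ and $p_k(x_k)=0$ for all $k$. The trace $\operatorname{tr}p$ of a nonconstant polynomial $p$ with leading coefficient $\alpha$ is the opposite of the coefficient of $\alpha^{-1}p$ on $t^{\deg p-1}$. *)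

From HB Require Import structures.
From mathcomp Require Import all_boot all_order all_algebra.
Set Implicit Arguments. Unset Strict Implicit. Unset Printing Implicit Defensive.
Import Order.TTheory GRing.Theory Num.Theory.
Local Open Scope ring_scope.

Definition finite_dim (F : fieldType) (V : lmodType F) : Prop :=
  exists s : seq V, forall v : V,
    exists c : 'I_(size s) -> F, v = \sum_(i < size s) c i *: s`_i.

Definition infinite_dim (F : fieldType) (V : lmodType F) : Prop :=
  ~ finite_dim V.

Definition poly_endo (F : fieldType) (V : lmodType F) (p : {poly F})
  (u : V -> V) : V -> V :=
  fun v => \sum_(i < size p) p`_i *: iter i u v.

Definition annihilates (F : fieldType) (V : lmodType F) (p : {poly F})
  (u : V -> V) : Prop := forall v, poly_endo p u v = 0.

Definition endo_sum3 (F : fieldType) (V : lmodType F) (p1 p2 p3 : {poly F})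
  (u : V -> V) : Prop :=
  exists u1 u2 u3 : V -> V,
    [/\ linear u1, linear u2 & linear u3] /\
    [/\ annihilates p1 u1, annihilates p2 u2 & annihilates p3 u3] /\
    (forall v, u v = u1 v + u2 v + u3 v).

Definition scalar_sum3 (F : fieldType) (p1 p2 p3 : {poly F}) (l : F) : Prop :=
  exists x1 x2 x3 : F,
    [/\ root p1 x1, root p2 x2, root p3 x3 & l = x1 + x2 + x3].

Definition split_poly (F : fieldType) (p : {poly F}) : Prop :=
  exists r : seq F, p = lead_coef p *: \prod_(x <- r) ('X - x%:P).

(* trace of nonconstant p: minus the coefficient of t^(deg p - 1) in the monic p *)
Definition poly_tr (F : fieldType) (p : {poly F}) : F :=
  - ((lead_coef p)^-1 *: p)`_(size p - 2).

(* If V = W ⊕ W, every 2 × 2 matrix M acts on V, and by Cayley–Hamilton this action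
   is annihilated by the characteristic polynomial of M.  When
   2λ = tr p1 + tr p2 + tr p3 there are 2 × 2 matrices with characteristic
   polynomials p1, p2, p3 and sum λ: two triangular ones and λ minus their sum, whose
   trace is then the right one and whose determinant is fixed by a free entry.  An
   infinite-dimensional V does split as W ⊕ W: by Zorn's lemma, a maximal pair of
   independent subspaces related by an isomorphism, with a countable free family held
   in reserve, can be made to exhaust V.
   Conversely, let λ id = u1 + u2 + u3 and let w be an eigenvector of u1.  If w is an
   eigenvector of u2, it is one of u3 as well and λ is a sum of roots.  Otherwise w and
   u2 w span a plane stable under the three maps, on which u1 is triangular: either
   the traces add up to 2λ, or u1 is scalar there and u2 has an eigenvector in it. *)

From HB Require Import structures.
From mathcomp Require Import all_boot all_order all_algebra.
From mathcomp Require Import ring.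
From mathcomp Require Import boolp classical_sets.
Import Order.TTheory GRing.Theory Num.Theory.
Set Implicit Arguments. Unset Strict Implicit. Unset Printing Implicit Defensive.
Local Open Scope ring_scope.

Definition linmap (F : fieldType) (V : lmodType F) (u : V -> V) (u_lin : linear u) :
  {linear V -> V} := HB.pack u (GRing.isLinear.Build _ _ _ _ u u_lin).

Section QuadraticPolynomials.
Variable F : fieldType.

Lemma XsubC2E (a b : F) :
  ('X - a%:P) * ('X - b%:P) = 'X^2 - (a + b)%:P * 'X + (a * b)%:P.
Proof. rewrite polyCD polyCM expr2; ring. Qed.

Lemma split_poly_size3 (p : {poly F}) : split_poly p -> size p = 3%N ->
  exists c a b, c != 0 /\ p = c *: (('X - a%:P) * ('X - b%:P)).
Proof.
move=> [r def_p] p3; have p_neq0 : p != 0 by rewrite -size_poly_eq0 p3.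
have lc_neq0 : lead_coef p != 0 by rewrite lead_coef_eq0.
have : size p = (size r).+1 by rewrite def_p size_scale // size_prod_XsubC.
rewrite p3; case: r def_p => [|a [|b [|]]] //= def_p _.
by exists (lead_coef p), a, b; split=> //; rewrite {1}def_p !big_cons big_nil mulr1.
Qed.

Lemma poly_trZ c (p : {poly F}) : c != 0 -> poly_tr (c *: p) = poly_tr p.
Proof.
move=> c_neq0; rewrite /poly_tr size_scale // lead_coefZ scalerA invfM.
by rewrite mulrAC mulVf // mul1r.
Qed.

Lemma poly_tr_XsubC2 (a b : F) : poly_tr (('X - a%:P) * ('X - b%:P)) = a + b.
Proof.
rewrite /poly_tr lead_coefM !lead_coefXsubC mulr1 invr1 scale1r.
rewrite size_mul ?polyXsubC_eq0 // !size_XsubC /=.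
by rewrite XsubC2E !coefE /=; ring.
Qed.

Variable V : lmodType F.

Lemma poly_endoZ c (p : {poly F}) (u : V -> V) v :
  c != 0 -> poly_endo (c *: p) u v = c *: poly_endo p u v.
Proof.
move=> c_neq0; rewrite /poly_endo size_scale // scaler_sumr.
by apply: eq_bigr => i _; rewrite coefZ scalerA.
Qed.

Lemma annihilatesZ c (p : {poly F}) (u : V -> V) :
  c != 0 -> annihilates (c *: p) u <-> annihilates p u.
Proof.
move=> c_neq0; split=> pu v; last by rewrite poly_endoZ // pu scaler0.
by apply: (scalerI c_neq0); rewrite -poly_endoZ // pu scaler0.
Qed.

Lemma poly_endo_XsubC2 (a b : F) (u : V -> V) v :
  poly_endo (('X - a%:P) * ('X - b%:P)) u v
  = u (u v) - (a + b) *: u v + (a * b) *: v.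
Proof.
rewrite /poly_endo size_mul ?polyXsubC_eq0 // !size_XsubC /= !big_ord_recr big_ord0 /=.
rewrite XsubC2E !coefE /= !mulr0 !mulr1 !subr0 !addr0 !add0r scale1r.
by rewrite scaleNr addrC [_ *: v + _]addrC addrA.
Qed.

End QuadraticPolynomials.

Lemma endo_sum3Z (F : fieldType) (V : lmodType F) (c1 c2 c3 : F) (p1 p2 p3 : {poly F})
    (u : V -> V) : c1 != 0 -> c2 != 0 -> c3 != 0 ->
  endo_sum3 (c1 *: p1) (c2 *: p2) (c3 *: p3) u <-> endo_sum3 p1 p2 p3 u.
Proof.
move=> c1_neq0 c2_neq0 c3_neq0.
split=> -[u1 [u2 [u3 [u_lin [[A1 A2 A3] u_sum]]]]]; exists u1, u2, u3; do 2 split=> //.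
  by split; [apply/(annihilatesZ _ _ c1_neq0) | apply/(annihilatesZ _ _ c2_neq0) |
             apply/(annihilatesZ _ _ c3_neq0)].
by split; [apply/(annihilatesZ _ _ c1_neq0) | apply/(annihilatesZ _ _ c2_neq0) |
           apply/(annihilatesZ _ _ c3_neq0)].
Qed.

Lemma scalar_sum3Z (F : fieldType) (c1 c2 c3 : F) (p1 p2 p3 : {poly F}) l :
  c1 != 0 -> c2 != 0 -> c3 != 0 ->
  scalar_sum3 (c1 *: p1) (c2 *: p2) (c3 *: p3) l <-> scalar_sum3 p1 p2 p3 l.
Proof.
move=> c1_neq0 c2_neq0 c3_neq0.
split=> -[x1 [x2 [x3 [r1 r2 r3 l_sum]]]]; exists x1, x2, x3; last by rewrite !rootZ.
by rewrite !rootZ // in r1 r2 r3.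
Qed.

Section Eigenvectors.
Variables (F : fieldType) (V : lmodType F) (u : {linear V -> V}).

Lemma annihilates_XsubC2E (a b : F) :
  annihilates (('X - a%:P) * ('X - b%:P)) u ->
  forall v, u (u v) = (a + b) *: u v - (a * b) *: v.
Proof.
move=> ann v; have /eqP := ann v; rewrite poly_endo_XsubC2 -addrA addr_eq0 => /eqP ->.
by rewrite opprD opprK.
Qed.

Lemma poly_endo_eigen (p : {poly F}) w x :
  u w = x *: w -> poly_endo p u w = p.[x] *: w.
Proof.
move=> uw; have iter_uw i : iter i u w = x ^+ i *: w.
  by elim: i => [|i IHi]; rewrite ?scale1r //= IHi linearZ_LR uw scalerA -exprSr.
rewrite /poly_endo horner_coef scaler_suml; apply: eq_bigr => i _.
by rewrite iter_uw scalerA.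
Qed.

Lemma annihilates_eigenvalue (p : {poly F}) w x :
  annihilates p u -> w != 0 -> u w = x *: w -> root p x.
Proof.
move=> ann w_neq0 uw; have := ann w; rewrite (poly_endo_eigen _ uw) => /eqP.
by rewrite scaler_eq0 (negPf w_neq0) orbF.
Qed.

Lemma exists_eigenvector (a b : F) (v : V) :
  annihilates (('X - a%:P) * ('X - b%:P)) u -> v != 0 ->
  exists w : V, w != 0 /\ (u w = a *: w \/ u w = b *: w).
Proof.
move=> ann v_neq0; have [uv | uv] := eqVneq (u v) (b *: v).
  by exists v; split; [|right].
exists (u v - b *: v); split; first by rewrite subr_eq0.
left; rewrite linearB linearZ_LR (annihilates_XsubC2E ann).
by rewrite scalerBr scalerA scalerDl addrAC addrK.
Qed.

End Eigenvectors.

Lemma scalar_sum3_endo_sum3 (F : fieldType) (V : lmodType F) (p1 p2 p3 : {poly F}) l :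
  scalar_sum3 p1 p2 p3 l -> endo_sum3 p1 p2 p3 (fun v : V => l *: v).
Proof.
move=> [x1 [x2 [x3 [r1 r2 r3 ->]]]].
have scale_lin x : linear (fun v : V => x *: v) by move=> k u v; rewrite scalerDr !scalerA mulrC.
have scale_ann p x : root p x -> annihilates p (fun v : V => x *: v).
  move=> /rootP px0 v.
  by rewrite (@poly_endo_eigen _ _ (linmap (scale_lin x)) p v x) // px0 scale0r.
exists (fun v => x1 *: v), (fun v => x2 *: v), (fun v => x3 *: v).
by split; [split | split; [split | move=> v; rewrite !scalerDl]]; auto.
Qed.

(** * The necessary condition *)

Section Necessity.
Variables (F : fieldType) (V : lmodType F) (u1 u2 u3 : {linear V -> V}).
Variables (l a1 b1 a2 b2 a3 b3 : F).
Hypothesis u1_ann : annihilates (('X - a1%:P) * ('X - b1%:P)) u1.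
Hypothesis u2_ann : annihilates (('X - a2%:P) * ('X - b2%:P)) u2.
Hypothesis u3_ann : annihilates (('X - a3%:P) * ('X - b3%:P)) u3.
Hypothesis u_sum : forall v, l *: v = u1 v + u2 v + u3 v.

Local Notation scalar_sum :=
  (scalar_sum3 (('X - a1%:P) * ('X - b1%:P)) (('X - a2%:P) * ('X - b2%:P))
               (('X - a3%:P) * ('X - b3%:P)) l).

Let u3E v : u3 v = l *: v - (u1 v + u2 v).
Proof. by rewrite u_sum [_ + u3 v]addrC addrK. Qed.

Lemma common_eigenvector_scalar_sum w x y :
  w != 0 -> u1 w = x *: w -> u2 w = y *: w -> scalar_sum.
Proof.
move=> w_neq0 u1w u2w; exists x, y, (l - x - y); split; last by ring.
- exact: annihilates_eigenvalue u1_ann w_neq0 u1w.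
- exact: annihilates_eigenvalue u2_ann w_neq0 u2w.
apply: annihilates_eigenvalue u3_ann w_neq0 _.
by rewrite u3E u1w u2w -scalerDl -scalerBl; congr (_ *: _); ring.
Qed.

Section NoncommonEigenvector.
Variables (w w2 z : V).
Hypotheses (w_neq0 : w != 0) (u1w : u1 w = a1 *: w).
Hypotheses (u2w : u2 w = w2) (u1w2 : u1 w2 = z).
Hypothesis not_eigen : ~ exists y, u2 w = y *: w.

(* Identities between combinations of [w], [w2], [z] are checked on their
   coefficient triples, where [ring] applies. *)
Let comb r s t := r *: w + s *: w2 + t *: z.

Let combD r s t r' s' t' : comb r s t + comb r' s' t' = comb (r + r') (s + s') (t + t').
Proof. by rewrite /comb !scalerDl addrACA [X in X + _]addrACA. Qed.
Let combZ k r s t : k *: comb r s t = comb (k * r) (k * s) (k * t).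
Proof. by rewrite /comb !scalerDr !scalerA. Qed.
Let combN r s t : - comb r s t = comb (- r) (- s) (- t).
Proof. by rewrite -scaleN1r combZ !mulN1r. Qed.
Let comb_w : w = comb 1 0 0. Proof. by rewrite /comb !scale0r !addr0 scale1r. Qed.
Let comb_w2 : w2 = comb 0 1 0. Proof. by rewrite /comb !scale0r addr0 add0r scale1r. Qed.
Let comb_z : z = comb 0 0 1. Proof. by rewrite /comb !scale0r !add0r scale1r. Qed.
Let linear_comb (f : {linear V -> V}) r s t : f (comb r s t) = r *: f w + s *: f w2 + t *: f z.
Proof. by rewrite /comb !linearD !linearZ_LR. Qed.

Ltac comb_norm := rewrite ?[w]comb_w ?[w2]comb_w2 ?[z]comb_z;
  repeat (first [rewrite combZ | rewrite combN | rewrite combD]).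

Let comb_free r s : comb r s 0 = 0 -> r = 0 /\ s = 0.
Proof.
rewrite /comb scale0r addr0 => rs0; have [s0 | s_neq0] := eqVneq s 0.
  move: rs0; rewrite s0 scale0r addr0 => /eqP.
  by rewrite scaler_eq0 (negPf w_neq0) orbF => /eqP.
case: not_eigen; exists (- (r / s)); rewrite u2w; apply: (scalerI s_neq0).
rewrite scalerA mulrN mulrCA divff // mulr1 scaleNr; apply/eqP.
by rewrite -addr_eq0 addrC rs0.
Qed.

Lemma noncommon_eigenvector :
  scalar_sum \/ 2%:R * l = a1 + b1 + (a2 + b2) + (a3 + b3).
Proof.
have u2w2 : u2 w2 = comb (- (a2 * b2)) (a2 + b2) 0.
  by rewrite -u2w (annihilates_XsubC2E u2_ann) u2w; comb_norm; congr comb; ring.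
have u3w : u3 w = comb (l - a1) (-1) 0.
  by rewrite u3E u1w u2w; comb_norm; congr comb; ring.
have u3w2 : u3 w2 = comb (a2 * b2) (l - (a2 + b2)) (-1).
  by rewrite u3E u1w2 u2w2; comb_norm; congr comb; ring.
(* The relation of [u3] at [w] gives [z = C w + e w2]: the plane spanned by [w]
   and [w2] is stable, and [u1] acts on it by the matrix [[a1, C], [0, e]]. *)
pose e := l - a1 + l - (a2 + b2) - (a3 + b3).
pose C := a2 * b2 + (a3 + b3) * (l - a1) - (l - a1) * (l - a1) - a3 * b3.
have zE : z = comb C e 0.
  have : comb (- C) (- e) 1 = 0.
    rewrite -[RHS](u3_ann w) poly_endo_XsubC2 u3w linear_comb u3w u3w2 scale0r addr0.
    by comb_norm; rewrite /C /e; congr comb; ring.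
  rewrite /comb scale1r addrC => /eqP; rewrite addr_eq0 => /eqP ->.
  by rewrite scale0r addr0 !scaleNr opprD !opprK.
have [Ce_b1 ea1e_b1] : C * (e - b1) = 0 /\ (e - a1) * (e - b1) = 0.
  apply: comb_free; rewrite -[RHS](u1_ann w2) poly_endo_XsubC2 u1w2 zE linear_comb.
  by rewrite u1w u1w2 zE scale0r addr0; comb_norm; congr comb; ring.
have [e_b1 | e_neq_b1] := eqVneq e b1.
  by right; rewrite -e_b1 /e; ring.
have e_b1_neq0 : e - b1 != 0 by rewrite subr_eq0.
have /eqP e_a1 : e == a1.
  by move/eqP: ea1e_b1; rewrite mulf_eq0 (negPf e_b1_neq0) orbF subr_eq0.
have /eqP C0 : C == 0 by move/eqP: Ce_b1; rewrite mulf_eq0 (negPf e_b1_neq0) orbF.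
left; apply: (@common_eigenvector_scalar_sum (w2 - a2 *: w) a1 b2).
- by rewrite subr_eq0; apply/eqP => u2w_a2; apply: not_eigen; exists a2; rewrite u2w.
- by rewrite linearB linearZ_LR u1w u1w2 zE C0 e_a1; comb_norm; congr comb; ring.
- by rewrite linearB linearZ_LR u2w u2w2; comb_norm; congr comb; ring.
Qed.

End NoncommonEigenvector.
End Necessity.

Lemma quadratic_sum_necessary (F : fieldType) (V : lmodType F) (u1 u2 u3 : {linear V -> V})
    (l a1 b1 a2 b2 a3 b3 : F) (v : V) : v != 0 ->
  annihilates (('X - a1%:P) * ('X - b1%:P)) u1 ->
  annihilates (('X - a2%:P) * ('X - b2%:P)) u2 ->
  annihilates (('X - a3%:P) * ('X - b3%:P)) u3 ->
  (forall v, l *: v = u1 v + u2 v + u3 v) ->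
  scalar_sum3 (('X - a1%:P) * ('X - b1%:P)) (('X - a2%:P) * ('X - b2%:P))
              (('X - a3%:P) * ('X - b3%:P)) l \/
  2%:R * l = a1 + b1 + (a2 + b2) + (a3 + b3).
Proof.
move=> v_neq0 + u2_ann u3_ann u_sum.
wlog [w [w_neq0 u1w]] : a1 b1 / exists w, w != 0 /\ u1 w = a1 *: w.
  move=> wlog_a1 u1_ann; have [w [w_neq0 [u1w | u1w]]] := exists_eigenvector u1_ann v_neq0.
    by apply: wlog_a1 => //; exists w.
  rewrite [('X - a1%:P) * _]mulrC [a1 + b1]addrC.
  by apply: wlog_a1; [exists w | rewrite mulrC].
move=> u1_ann; have [[y u2w] | not_eigen] := pselect (exists y, u2 w = y *: w).
  by left; exact: (common_eigenvector_scalar_sum u1_ann u2_ann u3_ann u_sum w_neq0 u1w u2w).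
exact: (noncommon_eigenvector u1_ann u2_ann u3_ann u_sum w_neq0 u1w erefl erefl not_eigen).
Qed.

(** * Matrices acting through matrix units *)

Section MatrixAction.
Variables (F : fieldType) (V : lmodType F) (n : nat).
Variable e : 'I_n.+1 -> 'I_n.+1 -> {linear V -> V}.
Hypothesis e_mul : forall i j k l v, e i j (e k l v) = if j == k then e i l v else 0.
Hypothesis e_id : forall v, \sum_i e i i v = v.

Definition mx_act (M : 'M[F]_n.+1) (v : V) : V := \sum_i \sum_j M i j *: e i j v.

Lemma mx_act_is_linear M : linear (mx_act M).
Proof.
move=> a v w; rewrite /mx_act scaler_sumr -big_split; apply: eq_bigr => i _.
rewrite scaler_sumr -big_split; apply: eq_bigr => j _.
by rewrite linearP scalerDr !scalerA mulrC.
Qed.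

Lemma mx_actD M N v : mx_act (M + N) v = mx_act M v + mx_act N v.
Proof.
rewrite /mx_act -big_split; apply: eq_bigr => i _.
by rewrite -big_split; apply: eq_bigr => j _; rewrite mxE scalerDl.
Qed.

Lemma mx_act_scalar a v : mx_act a%:M v = a *: v.
Proof.
rewrite /mx_act -{2}(e_id v) scaler_sumr; apply: eq_bigr => i _.
rewrite (bigD1 i) //= big1 => [|j /negPf ji]; first by rewrite mxE eqxx mulr1n addr0.
by rewrite mxE eq_sym ji mulr0n scale0r.
Qed.

Lemma mx_act_mul M N v : mx_act M (mx_act N v) = mx_act (M *m N) v.
Proof.
rewrite /mx_act; apply: eq_bigr => i _.
have eN j : e i j (\sum_k \sum_l N k l *: e k l v) = \sum_l N j l *: e i l v.
  rewrite linear_sum (bigD1 j) //= [X in _ + X]big1 => [|k /negPf jk].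
    by rewrite addr0 linear_sum; apply: eq_bigr => l _; rewrite linearZ_LR e_mul eqxx.
  by rewrite linear_sum big1 // => l _; rewrite linearZ_LR e_mul eq_sym jk scaler0.
under eq_bigr do rewrite eN scaler_sumr.
rewrite exchange_big; apply: eq_bigr => l _.
by rewrite mxE scaler_suml; apply: eq_bigr => j _; rewrite scalerA.
Qed.

Lemma mx_actZ a M v : mx_act (a *: M) v = a *: mx_act M v.
Proof.
rewrite /mx_act scaler_sumr; apply: eq_bigr => i _.
by rewrite scaler_sumr; apply: eq_bigr => j _; rewrite mxE scalerA.
Qed.

Lemma mx_act_sum I (r : seq I) (P : pred I) (Ms : I -> 'M_n.+1) v :
  mx_act (\sum_(i <- r | P i) Ms i) v = \sum_(i <- r | P i) mx_act (Ms i) v.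
Proof.
apply: (big_morph (fun M => mx_act M v)) => [M N|]; first exact: mx_actD.
by rewrite -(scale0r (0 : 'M_n.+1)) mx_actZ scale0r.
Qed.

Lemma mx_act_exp M k v : mx_act (M ^+ k) v = iter k (mx_act M) v.
Proof.
elim: k => [|k IHk]; first by rewrite expr0 mx_act_scalar scale1r.
by rewrite exprS -mulmxE -mx_act_mul IHk.
Qed.

Lemma mx_act_horner M p v : mx_act (horner_mx M p) v = poly_endo p (mx_act M) v.
Proof.
rewrite -[p in horner_mx _ p]coefK poly_def linear_sum mx_act_sum.
by apply: eq_bigr => i _; rewrite linearZ rmorphXn /= horner_mx_X mx_actZ mx_act_exp.
Qed.

Lemma annihilates_char_poly M : annihilates (char_poly M) (mx_act M).
Proof. by move=> v; rewrite -mx_act_horner Cayley_Hamilton -(scale0r 0) mx_actZ scale0r. Qed.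

End MatrixAction.

Lemma ord2_cases (i : 'I_2) : i = 0 \/ i = 1.
Proof. by case: i => [[|[|//]] ?]; [left | right]; apply: val_inj. Qed.

Section TwoByTwo.
Variable R : comNzRingType.

Definition mx2 (a b c d : R) : 'M[R]_2 :=
  \matrix_(i, j) if i == 0 then (if j == 0 then a else b) else (if j == 0 then c else d).

Lemma mx2_entries (M : 'M[R]_2) : M = mx2 (M 0 0) (M 0 1) (M 1 0) (M 1 1).
Proof.
by apply/matrixP => i j; rewrite mxE; case: (ord2_cases i) => ->; case: (ord2_cases j) => ->.
Qed.

Lemma det_mx2 a b c d : \det (mx2 a b c d) = a * d - b * c.
Proof.
rewrite (expand_det_row _ 0) !big_ord_recl big_ord0 /cofactor !det_mx11 !mxE /=.
by rewrite expr0 expr1; ring.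
Qed.

Lemma scalar_mx2 a : a%:M = mx2 a 0 0 a.
Proof. by rewrite [LHS]mx2_entries !mxE. Qed.

Lemma mx2D a b c d a' b' c' d' :
  mx2 a b c d + mx2 a' b' c' d' = mx2 (a + a') (b + b') (c + c') (d + d').
Proof. by rewrite [LHS]mx2_entries !mxE. Qed.

End TwoByTwo.

Lemma char_poly_mx2 (R : comNzRingType) (a b c d : R) :
  char_poly (mx2 a b c d) = ('X - a%:P) * ('X - d%:P) - (b * c)%:P.
Proof.
rewrite /char_poly [char_poly_mx _]mx2_entries det_mx2 !mxE /= polyCM; ring.
Qed.

Section SumOfThreeQuadratics.
Variables (F : fieldType) (V : lmodType F).
Variable e : 'I_2 -> 'I_2 -> {linear V -> V}.
Hypothesis e_mul : forall i j k l v, e i j (e k l v) = if j == k then e i l v else 0.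
Hypothesis e_id : forall v, \sum_i e i i v = v.

Lemma matrix_units_endo_sum3 (l a1 b1 a2 b2 a3 b3 : F) :
  2%:R * l = a1 + b1 + (a2 + b2) + (a3 + b3) ->
  endo_sum3 (('X - a1%:P) * ('X - b1%:P)) (('X - a2%:P) * ('X - b2%:P))
            (('X - a3%:P) * ('X - b3%:P)) (fun v : V => l *: v).
Proof.
(* [M1] and [M2] are triangular with the prescribed diagonals, [M1 + M2 + M3 = l],
   [y] makes [det M3 = a3 b3], and the trace condition gives [tr M3 = a3 + b3]. *)
move=> tr_sum; pose y := (l - a1 - b2) * (l - b1 - a2) - a3 * b3.
pose M1 := mx2 a1 1 0 b1; pose M2 := mx2 b2 0 y a2.
pose M3 := mx2 (l - a1 - b2) (-1) (- y) (l - b1 - a2).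
exists (mx_act e M1), (mx_act e M2), (mx_act e M3).
split; first by split; apply: mx_act_is_linear.
split; last first.
  move=> v; rewrite -!mx_actD !mx2D -(mx_act_scalar e_id) scalar_mx2.
  by congr (mx_act e (mx2 _ _ _ _) v); ring.
split.
- have -> : ('X - a1%:P) * ('X - b1%:P) = char_poly M1.
    by rewrite char_poly_mx2 mulr0 subr0.
  exact: annihilates_char_poly.
- have -> : ('X - a2%:P) * ('X - b2%:P) = char_poly M2.
    by rewrite char_poly_mx2 mul0r subr0 mulrC.
  exact: annihilates_char_poly.
- have -> : ('X - a3%:P) * ('X - b3%:P) = char_poly M3.
    rewrite char_poly_mx2 !XsubC2E -[RHS]addrA -polyCB.
    have -> : l - a1 - b2 + (l - b1 - a2) = a3 + b3.
      by apply: (addrI (a1 + b1 + (a2 + b2))); rewrite -tr_sum; ring.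
    by congr (_ + _%:P); rewrite /y; ring.
  exact: annihilates_char_poly.
Qed.

End SumOfThreeQuadratics.

(** * Infinite-dimensional spaces are squares *)

Section FreeSequences.
Variables (F : fieldType) (V : lmodType F).

Definition lincomb n (a : nat -> F) (c : nat -> V) : V := \sum_(i < n) a i *: c i.

Definition free_seq (c : nat -> V) :=
  forall n a, lincomb n a c = 0 -> forall i, (i < n)%N -> a i = 0.

Definition span_seq (c : nat -> V) : set V := [set v | exists n a, v = lincomb n a c].

Definition truncf n (a : nat -> F) i := if (i < n)%N then a i else 0.

Lemma lincomb_widen n N a c : (n <= N)%N -> lincomb n a c = lincomb N (truncf n a) c.
Proof.
move=> le_nN; rewrite /lincomb (big_ord_widen _ (fun i => a i *: c i) le_nN) big_mkcond.
by apply: eq_bigr => i _; rewrite /truncf; case: ifP; rewrite ?scale0r.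
Qed.

Lemma lincombD n m a b c :
  lincomb n a c + lincomb m b c = lincomb (n + m) (fun i => truncf n a i + truncf m b i) c.
Proof.
rewrite (lincomb_widen a c (leq_addr m n)) (lincomb_widen b c (leq_addl n m)).
by rewrite /lincomb -big_split; apply: eq_bigr => i _; rewrite scalerDl.
Qed.

Lemma lincombZ k n a c : k *: lincomb n a c = lincomb n (fun i => k * a i) c.
Proof. by rewrite /lincomb scaler_sumr; apply: eq_bigr => i _; rewrite scalerA. Qed.

Lemma lincomb_eq0 n a c : (forall i, (i < n)%N -> a i = 0) -> lincomb n a c = 0.
Proof. by move=> a0; rewrite /lincomb big1 // => i _; rewrite a0 // scale0r. Qed.

Lemma span_seq0 c : span_seq c 0.
Proof. by exists 0%N, (fun=> 0); rewrite /lincomb big_ord0. Qed.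

Lemma span_seqZ c k v : span_seq c v -> span_seq c (k *: v).
Proof. by move=> [n [a ->]]; rewrite lincombZ; do 2 eexists. Qed.

Definition interleave (a b : nat -> F) j := if odd j then b j./2 else a j./2.

Lemma lincomb_interleave n a b c :
  lincomb n a (fun i => c i.*2) + lincomb n b (fun i => c i.*2.+1)
  = lincomb n.*2 (interleave a b) c.
Proof.
have pairs (g : nat -> V) m : \sum_(i < m.*2) g i = \sum_(i < m) (g i.*2 + g i.*2.+1).
  by elim: m => [|m IHm]; rewrite ?big_ord0 // doubleS !big_ord_recr /= IHm addrA.
rewrite /lincomb (pairs (fun j => interleave a b j *: c j)) -big_split /=.
apply: eq_bigr => i _; rewrite /interleave odd_double doubleK /=.
by rewrite odd_double uphalf_double.
Qed.

Lemma lincomb_deinterleave n a c : lincomb n a c =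
  lincomb n (fun i => truncf n a i.*2) (fun i => c i.*2) +
  lincomb n (fun i => truncf n a i.*2.+1) (fun i => c i.*2.+1).
Proof.
rewrite lincomb_interleave (lincomb_widen a c (leq_addr n n)) addnn.
apply: eq_bigr => i _; congr (_ *: _); rewrite /interleave.
by case: (boolP (odd i)) => [|/negPf] odd_i;
  rewrite -[in LHS](odd_double_half i) odd_i ?add1n ?add0n.
Qed.

Lemma free_seq_interleave c n m a b : free_seq c ->
  lincomb n a (fun i => c i.*2) + lincomb m b (fun i => c i.*2.+1) = 0 ->
  (forall i, (i < n)%N -> a i = 0) /\ (forall i, (i < m)%N -> b i = 0).
Proof.
move=> free_c; rewrite (lincomb_widen a _ (leq_addr m n)).
rewrite (lincomb_widen b _ (leq_addl n m)) lincomb_interleave => /free_c a0.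
split=> i lt_i.
  have := a0 i.*2; rewrite /interleave odd_double doubleK /truncf lt_i => -> //.
  by rewrite ltn_double ltn_addr.
have := a0 i.*2.+1; rewrite /interleave /= odd_double /= uphalf_double /truncf lt_i => -> //.
by rewrite ltn_Sdouble ltn_addl.
Qed.

Lemma span_seq_interleave c n m a b :
  span_seq c (lincomb n a (fun i => c i.*2) + lincomb m b (fun i => c i.*2.+1)).
Proof.
rewrite (lincomb_widen a _ (leq_addr m n)) (lincomb_widen b _ (leq_addl n m)).
by rewrite lincomb_interleave; do 2 eexists.
Qed.

End FreeSequences.

Section InfiniteDimension.
Variables (F : fieldType) (V : lmodType F).

Lemma infinite_dim_free_seq : infinite_dim V -> exists c : nat -> V, free_seq c.
Proof.
move=> V_inf; have /choice [next next_new] : forall s : seq V, exists v : V,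
    forall k : 'I_(size s) -> F, v <> \sum_(i < size s) k i *: s`_i.
  move=> s; apply: contrapT => spanned; apply: V_inf; exists s => v.
  by apply: contrapT => v_new; apply: spanned; exists v => k v_k; apply: v_new; exists k.
pose S n := iter n (fun s => rcons s (next s)) [::].
have size_S n : size (S n) = n by elim: n => //= n IHn; rewrite size_rcons IHn.
have S_next n : nth 0 (S n.+1) n = next (S n) by rewrite nth_rcons size_S ltnn eqxx.
have nth_S n i : (i < n)%N -> nth 0 (S n) i = nth 0 (S i.+1) i.
  elim: n => // n IHn; rewrite ltnS leq_eqVlt => /orP [/eqP -> // | lt_in].
  by rewrite nth_rcons size_S lt_in IHn.
exists (fun i => nth 0 (S i.+1) i); elim=> [//|n IHn] a.
rewrite /lincomb big_ord_recr /= S_next => a_rel.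
have an0 : a n = 0.
  apply: contrapT => /eqP an_neq0; apply: (next_new (S n) (fun i => - a i / a n)).
  apply: (scalerI an_neq0); rewrite scaler_sumr.
  rewrite -(big_mkord xpredT (fun i => a n *: ((- a i / a n) *: (S n)`_i))) size_S.
  rewrite big_mkord (eq_bigr (fun i : 'I_n => - (a i *: nth 0 (S i.+1) i))) => [|i _].
    by rewrite sumrN; apply/eqP; rewrite -addr_eq0 addrC a_rel.
  by rewrite nth_S // scalerA mulrCA divff // mulr1 scaleNr.
move: a_rel; rewrite an0 scale0r addr0 => /IHn a0 i.
by rewrite ltnS leq_eqVlt => /orP [/eqP -> | /a0].
Qed.

Lemma infinite_dim_exists_neq0 : infinite_dim V -> exists v : V, v != 0.
Proof.
move=> V_inf; apply: contrapT => all0; apply: V_inf; exists [::] => v; exists (fun=> 0).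
by rewrite big_ord0; apply: contrapT => /eqP v_neq0; apply: all0; exists v.
Qed.

End InfiniteDimension.

Section TwinGraphs.
Variables (F : fieldType) (V : lmodType F).
Local Open Scope classical_set_scope.
Implicit Types (E : set V) (G : set (V * V)).

(* [G] is the graph of a linear isomorphism between two subspaces [W] and [W'] of
   [V] such that the sum [W + W' + E] is direct; [G] covers [E] when this sum is [V]. *)
Definition twin_graph E G :=
  [/\ forall x y x' y', G (x, y) -> G (x', y') -> G (x + x', y + y'),
      forall k x y, G (x, y) -> G (k *: x, k *: y),
      forall y, G (0, y) -> y = 0,
      forall x, G (x, 0) -> x = 0 &
      forall x y x' y' e, G (x, y) -> G (x', y') -> E e -> x + y' + e = 0 ->
        x = 0 /\ e = 0].

Definition twin_covers G E :=
  forall v, exists x y x' y' e, [/\ G (x, y), G (x', y'), E e & v = x + y' + e].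

Definition independent_pair G E p q := forall r s x y x' y' e,
  G (x, y) -> G (x', y') -> E e -> x + r *: p + (y' + s *: q) + e = 0 ->
  r = 0 /\ s = 0.

Definition twin_ext G p q : set (V * V) :=
  [set xy | exists r x y, G (x, y) /\ xy = (x + r *: p, y + r *: q)].

Lemma twin_graph_bigcup E (Gs : set (set (V * V))) :
  Gs `<=` twin_graph E -> total_on Gs subset -> twin_graph E (\bigcup_(G in Gs) G).
Proof.
move=> Gs_twin Gs_total; split.
- move=> x y x' y' [G GsG Gxy] [G' GsG' G'xy].
  have [GG' | G'G] := Gs_total G G' GsG GsG'.
    case: (Gs_twin G' GsG') => addG' _ _ _ _.
    by exists G' => //; apply: addG' (GG' _ Gxy) G'xy.
  case: (Gs_twin G GsG) => addG _ _ _ _.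
  by exists G => //; apply: addG Gxy (G'G _ G'xy).
- move=> k x y [G GsG Gxy]; case: (Gs_twin G GsG) => _ scaleG _ _ _.
  by exists G => //; apply: scaleG.
- by move=> y [G GsG Gxy]; case: (Gs_twin G GsG) => _ _ G0y _ _; apply: G0y.
- by move=> x [G GsG Gxy]; case: (Gs_twin G GsG) => _ _ _ Gx0 _; apply: Gx0.
- move=> x y x' y' e [G GsG Gxy] [G' GsG' G'xy] Ee.
  have [GG' | G'G] := Gs_total G G' GsG GsG'.
    by case: (Gs_twin G' GsG') => _ _ _ _ dirG'; apply: dirG' (GG' _ Gxy) G'xy Ee.
  by case: (Gs_twin G GsG) => _ _ _ _ dirG; apply: dirG Gxy (G'G _ G'xy) Ee.
Qed.

Lemma twin_graph_ext E G p q : E 0 -> twin_graph E G -> G (0, 0) ->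
  independent_pair G E p q -> twin_graph E (twin_ext G p q).
Proof.
move=> E0 [addG scaleG G0y Gx0 dirG] G00 pq_indep; split.
- move=> _ _ _ _ [r [x [y [Gxy [-> ->]]]]] [r' [x' [y' [Gxy' [-> ->]]]]].
  exists (r + r'), (x + x'), (y + y'); split; first exact: addG.
  by rewrite !scalerDl; congr (_, _); rewrite addrACA.
- move=> k _ _ [r [x [y [Gxy [-> ->]]]]]; exists (k * r), (k *: x), (k *: y).
  by split; [exact: scaleG | rewrite !scalerDr !scalerA].
- move=> _ [r [x [y [Gxy [x_rp ->]]]]].
  have [r0 _] : r = 0 /\ 0 = 0 :> F.
    by apply: (pq_indep r 0 x y 0 0 0) => //; rewrite scale0r !addr0 -x_rp.
  by move: x_rp Gxy; rewrite r0 !scale0r !addr0 => <- /G0y.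
- move=> _ [r [x [y [Gxy [-> y_rq]]]]].
  have [_ r0] : 0 = 0 :> F /\ r = 0.
    by apply: (pq_indep 0 r 0 0 x y 0) => //; rewrite scale0r !addr0 add0r -y_rq.
  by move: y_rq Gxy; rewrite r0 !scale0r !addr0 => <- /Gx0.
- move=> _ _ _ _ e [r [x [y [Gxy [-> _]]]]] [r' [x' [y' [Gxy' [_ ->]]]]] Ee xye0.
  have [r0 r'0] := pq_indep r r' x y x' y' e Gxy Gxy' Ee xye0.
  move: xye0; rewrite r0 r'0 !scale0r !addr0 => xye0.
  exact: dirG Gxy Gxy' Ee xye0.
Qed.

Lemma exists_maximal_twin_graph E : E 0 ->
  exists G, [/\ twin_graph E G, G (0, 0) & forall p q, ~ independent_pair G E p q].
Proof.
move=> E0; have [G [G_twin G_max]] := Zorn_bigcup (@twin_graph_bigcup E).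
have G00 : G (0, 0).
  apply: contrapT => nG00; have [[x y] Gxy] : exists xy, G xy.
    apply: contrapT => G_empty; apply: (G_max [set (0, 0)]); last first.
      split=> [_ _ _ _ [= -> ->] [= -> ->] | k _ _ [= -> ->] | y [= ->] | x [= ->] |
               x y x' y' e [= -> _] [= _ ->] _]; rewrite ?addr0 ?scaler0 //.
      by rewrite !add0r => ->.
    split=> [xy Gxy | G0]; first by case: G_empty; exists xy.
    by apply: nG00; exact: G0.
  by case: G_twin => _ scaleG _ _ _; apply: nG00; have := scaleG 0 x y Gxy; rewrite !scale0r.
exists G; split=> // p q pq_indep.
apply: (G_max (twin_ext G p q)); last exact: twin_graph_ext.
split=> [[x y] Gxy | ext_sub]; first by exists 0, x, y; rewrite !scale0r !addr0.
have Gpq : G (p, q) by apply: ext_sub; exists 1, 0, 0; rewrite !scale1r !add0r.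
case: G_twin => _ scaleG _ _ _.
have Gnpq : G (- p, - q) by rewrite -!scaleN1r; apply: scaleG.
have [|/eqP] := pq_indep 1 0 (- p) (- q) 0 0 0 Gnpq G00 E0.
  by rewrite scale1r addNr scale0r !addr0.
by rewrite oner_eq0.
Qed.

Definition free_from G E z := forall s x y x' y' e,
  G (x, y) -> G (x', y') -> E e -> x + (y' + s *: z) + e = 0 -> s = 0.

Definition seq_cons (z : V) (c : nat -> V) i := if i is j.+1 then c j else z.

Lemma lincomb_seq_cons z c n b :
  lincomb n.+1 b (seq_cons z c) = b 0%N *: z + lincomb n (fun i => b i.+1) c.
Proof. by rewrite /lincomb big_ord_recl. Qed.

Lemma span_seq_consP z c v :
  span_seq (seq_cons z c) v <-> exists k e, span_seq c e /\ v = k *: z + e.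
Proof.
split=> [[[|n] [b ->]] | [k [e [[n [b ->]] ->]]]].
- by exists 0, 0; rewrite /lincomb big_ord0 scale0r addr0; split=> //; apply: span_seq0.
- by rewrite lincomb_seq_cons; do 2 eexists; split=> //; do 2 eexists.
- by exists n.+1, (fun i => if i is j.+1 then b j else k); rewrite lincomb_seq_cons.
Qed.

Lemma scaler_solve (r : F) (v w : V) : r != 0 -> r *: v + w = 0 -> v = (- r^-1) *: w.
Proof.
move=> r_neq0 /eqP; rewrite addr_eq0 => /eqP rv.
by apply: (scalerI r_neq0); rewrite rv scalerA mulrN divff // scaleN1r.
Qed.

(* A maximal twin graph direct with [span_seq c] leaves a complement of dimension
   at most one; a complementary vector is absorbed by prepending it to [c]. *)
Lemma exists_twin_cover (c : nat -> V) : free_seq c -> exists G (c' : nat -> V),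
  [/\ twin_graph (span_seq c') G, G (0, 0), free_seq c' & twin_covers G (span_seq c')].
Proof.
move=> free_c; have [A [A_twin A00 A_max]] := exists_maximal_twin_graph (span_seq0 c).
have scaleA k x y : A (x, y) -> A (k *: x, k *: y) by case: A_twin => _ + _ _ _; apply.
have [[z z_free] | no_free] := pselect (exists z, free_from A (span_seq c) z).
  exists A, (seq_cons z c); split=> //.
  - case: A_twin => addA _ A0y Ax0 dirA; split=> // x y x' y' e' Axy Axy'.
    move=> /span_seq_consP [k [e [Ee ->]]] xye0.
    have k0 : k = 0 by apply: (z_free k x y x' y' e) => //; rewrite -xye0 !addrA.
    by move: xye0; rewrite k0 scale0r add0r; apply: dirA Axy Axy' Ee.
  - move=> [//|n] b; rewrite lincomb_seq_cons => b_rel.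
    have b0 : b 0%N = 0.
      apply: (z_free _ 0 0 0 0 (lincomb n (fun i => b i.+1) c)) => //.
        by do 2 eexists.
      by rewrite !add0r.
    by move: b_rel; rewrite b0 scale0r add0r => /free_c b_rel [|i] //; apply: b_rel.
  move=> v; apply: contrapT => v_uncovered.
  apply: (A_max v z) => r s x y x' y' e Axy Axy' Ee xye0.
  have [r0 | r_neq0] := eqVneq r 0.
    by split=> //; apply: (z_free s x y x' y' e) => //; rewrite -xye0 r0 scale0r addr0.
  case: v_uncovered; exists ((- r^-1) *: x), ((- r^-1) *: y), ((- r^-1) *: x').
  exists ((- r^-1) *: y'), ((- r^-1) *: (s *: z + e)); split; try exact: scaleA.
    by apply/span_seqZ/span_seq_consP; exists s, e.
  rewrite -!scalerDr; apply: scaler_solve r_neq0 _.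
  by rewrite -xye0 !addrA [r *: v + x]addrC.
exists A, c; split=> // v; apply: contrapT => v_uncovered; apply: no_free; exists v.
move=> s x y x' y' e Axy Axy' Ee xye0; apply: contrapT => /eqP s_neq0.
case: v_uncovered; exists ((- s^-1) *: x), ((- s^-1) *: y), ((- s^-1) *: x').
exists ((- s^-1) *: y'), ((- s^-1) *: e); split; try exact: scaleA; first exact: span_seqZ.
rewrite -!scalerDr; apply: scaler_solve s_neq0 _.
by rewrite -xye0 addrCA !addrA.
Qed.

Section Absorption.
Variables (K : set (V * V)) (c : nat -> V).
Hypotheses (K_twin : twin_graph (span_seq c) K) (K00 : K (0, 0)).
Hypotheses (free_c : free_seq c) (K_covers : twin_covers K (span_seq c)).

Let ce i := c i.*2.
Let co i := c i.*2.+1.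

(* The shift [c (2 i) |-> c (2 i + 1)] maps the span of the even terms onto that
   of the odd terms; adding its graph to [K] absorbs [span_seq c]. *)
Let H : set (V * V) := [set xy | exists x y n a,
  K (x, y) /\ xy = (x + lincomb n a ce, y + lincomb n a co)].

Let span_ce n a : span_seq c (lincomb n a ce).
Proof.
by have := span_seq_interleave c n 0 a (fun=> 0); rewrite {2}/lincomb big_ord0 addr0.
Qed.

Let span_co n a : span_seq c (lincomb n a co).
Proof.
by have := span_seq_interleave c 0 n (fun=> 0) a; rewrite {1}/lincomb big_ord0 add0r.
Qed.

Let ce_free n a : lincomb n a ce = 0 -> forall i, (i < n)%N -> a i = 0.
Proof.
move=> a_rel; have := @free_seq_interleave _ _ c n 0 a (fun=> 0) free_c.
by rewrite {2}/lincomb big_ord0 addr0 a_rel => /(_ erefl) [].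
Qed.

Let co_free n a : lincomb n a co = 0 -> forall i, (i < n)%N -> a i = 0.
Proof.
move=> a_rel; have := @free_seq_interleave _ _ c 0 n (fun=> 0) a free_c.
by rewrite {1}/lincomb big_ord0 add0r a_rel => /(_ erefl) [].
Qed.

Let twin_graph_absorb : twin_graph [set 0] H.
Proof.
case: K_twin => addK scaleK K0y Kx0 dirK; split.
- move=> _ _ _ _ [x [y [n [a [Kxy [-> ->]]]]]] [x' [y' [m [b [Kxy' [-> ->]]]]]].
  exists (x + x'), (y + y'), (n + m)%N, (fun i => truncf n a i + truncf m b i).
  by split; [exact: addK | rewrite -!lincombD; congr (_, _); apply: addrACA].
- move=> k _ _ [x [y [n [a [Kxy [-> ->]]]]]].
  exists (k *: x), (k *: y), n, (fun i => k * a i).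
  by split; [exact: scaleK | rewrite !scalerDr !lincombZ].
- move=> _ [x [y [n [a [Kxy [x_a ->]]]]]].
  have [x0 a_ce0] : x = 0 /\ lincomb n a ce = 0.
    by apply: (dirK _ _ _ _ _ Kxy K00 (span_ce n a)); rewrite addr0 -x_a.
  by rewrite (lincomb_eq0 co (ce_free a_ce0)) addr0; apply: K0y; rewrite -x0.
- move=> _ [x [y [n [a [Kxy [-> y_a]]]]]].
  have [_ a_co0] : 0 = 0 :> V /\ lincomb n a co = 0.
    by apply: (dirK _ _ _ _ _ K00 Kxy (span_co n a)); rewrite add0r -y_a.
  have y0 : y = 0 by rewrite -[y]addr0 -a_co0 -y_a.
  by rewrite (lincomb_eq0 ce (co_free a_co0)) addr0; apply: Kx0; rewrite -y0.
- move=> _ _ _ _ _ [x [y [n [a [Kxy [-> _]]]]]] [x' [y' [m [b [Kxy' [_ ->]]]]]] -> xy'0.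
  have [x0 ab0] : x = 0 /\ lincomb n a ce + lincomb m b co = 0.
    apply: (dirK _ _ _ _ _ Kxy Kxy' (span_seq_interleave c n m a b)).
    by rewrite -addrACA -xy'0 addr0.
  have [a0 _] := free_seq_interleave free_c ab0.
  by rewrite x0 add0r (lincomb_eq0 ce a0).
Qed.

Let twin_covers_absorb : twin_covers H [set 0].
Proof.
move=> v; have [x [y [x' [y' [_ [Kxy Kxy' [n [a ->]] ->]]]]]] := K_covers v.
rewrite lincomb_deinterleave.
set a1 := fun i => truncf n a i.*2; set a2 := fun i => truncf n a i.*2.+1.
exists (x + lincomb n a1 ce), (y + lincomb n a1 co), (x' + lincomb n a2 ce).
exists (y' + lincomb n a2 co), 0; split=> //; first by exists x, y, n, a1.
  by exists x', y', n, a2.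
by rewrite addr0 addrACA.
Qed.

Lemma exists_twin_decomposition :
  exists H : set (V * V), twin_graph [set 0] H /\ twin_covers H [set 0].
Proof. by exists H; split; [apply: twin_graph_absorb | apply: twin_covers_absorb]. Qed.

End Absorption.
End TwinGraphs.

Section TwinMatrixUnits.
Variables (F : fieldType) (V : lmodType F) (H : set (V * V)).
Hypothesis H_twin : twin_graph [set 0] H.
Variable dec : V -> (V * V) * (V * V).
Hypothesis decP : forall v, [/\ H (dec v).1, H (dec v).2 & v = (dec v).1.1 + (dec v).2.2].

Let decE x y x' y' : H (x, y) -> H (x', y') -> dec (x + y') = ((x, y), (x', y')).
Proof.
case: H_twin => addH scaleH H0y Hx0 dirH Hxy Hxy'.
have subH p1 p2 q1 q2 : H (p1, p2) -> H (q1, q2) -> H (p1 - q1, p2 - q2).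
  by move=> Hp Hq; apply: addH Hp _; rewrite -!scaleN1r; apply: scaleH.
case: (decP (x + y')); case: (dec (x + y')) => [[p1 p2] [q1 q2]] /= Hp Hq xy'E.
have [/eqP x_p1 _] : x - p1 = 0 /\ 0 = 0 :> V.
  apply: dirH (subH _ _ _ _ Hxy Hp) (subH _ _ _ _ Hxy' Hq) erefl _.
  by rewrite addr0 addrACA -opprD xy'E subrr.
move: x_p1; rewrite subr_eq0 => /eqP x_p1; subst p1.
move/addrI: xy'E => y'_q2; subst q2.
have := subH _ _ _ _ Hxy Hp; rewrite subrr => /H0y/eqP; rewrite subr_eq0 => /eqP <-.
have := subH _ _ _ _ Hxy' Hq; rewrite subrr => /Hx0/eqP; rewrite subr_eq0 => /eqP <-.
by [].
Qed.

Let dec_lin k u v : dec (k *: u + v) = k *: dec u + dec v.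
Proof.
case: H_twin => addH scaleH _ _ _; case: (decP u) (decP v) => Hu1 Hu2 uE [Hv1 Hv2 vE].
rewrite {1}uE {1}vE scalerDr addrACA.
case: (dec u) (dec v) Hu1 Hu2 Hv1 Hv2 => [[? ?] [? ?]] [[? ?] [? ?]] /= Hu1 Hu2 Hv1 Hv2.
by apply: decE; apply: addH => //; apply: scaleH.
Qed.

Let H00 : H (0, 0).
Proof.
case: H_twin => _ scaleH _ _ _; case: (decP 0); case: (dec 0) => [[x y] ?] /=.
by move=> /(scaleH 0) + _ _; rewrite !scale0r.
Qed.

Let dec_fst x y : H (x, y) -> dec x = ((x, y), (0, 0)).
Proof. by move=> Hxy; have := decE Hxy H00; rewrite addr0. Qed.

Let dec_snd x y : H (x, y) -> dec y = ((0, 0), (x, y)).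
Proof. by move=> Hxy; have := decE H00 Hxy; rewrite add0r. Qed.

(* With [V = W + psi W] given by [H] = graph of [psi], [coord j v] is the j-th
   coordinate of [v] in [W * W] and [embed i] maps [W] onto the i-th copy, so that
   [embed i \o coord j] are the matrix units. *)
Let coord (j : 'I_2) v := if j == 0 then (dec v).1.1 else (dec v).2.1.
Let embed (i : 'I_2) w := if i == 0 then (dec w).1.1 else (dec w).1.2.

Let coord_lin j : linear (coord j).
Proof. by move=> k u v; rewrite /coord dec_lin; case: (j == 0). Qed.

Let embed_lin i : linear (embed i).
Proof. by move=> k u v; rewrite /embed dec_lin; case: (i == 0). Qed.

Let coordH j v : exists y, H (coord j v, y).
Proof.
rewrite /coord; case: (decP v); case: (dec v) => [[x y] [x' y']] /= Hxy Hxy' _.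
by case: (j == 0); eexists; eassumption.
Qed.

Let coord_embed k i w y : H (w, y) -> coord k (embed i w) = if k == i then w else 0.
Proof.
move=> Hwy; rewrite /coord /embed.
by case: (ord2_cases i) (ord2_cases k) => -> [] ->; rewrite ?(dec_fst Hwy) ?(dec_snd Hwy).
Qed.

Let embed0 i : embed i 0 = 0.
Proof. by have := decE H00 H00; rewrite addr0 /embed => ->; case: (i == 0). Qed.

Lemma twin_matrix_units : exists e : 'I_2 -> 'I_2 -> {linear V -> V},
  (forall i j k l v, e i j (e k l v) = if j == k then e i l v else 0) /\
  (forall v, \sum_i e i i v = v).
Proof.
have e_lin i j : linear (fun v => embed i (coord j v)).
  by move=> k u v; rewrite coord_lin embed_lin.
exists (fun i j => linmap (e_lin i j)); split=> [i j k l v | v] /=.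
  have [y Hy] := coordH l v; rewrite (coord_embed _ _ Hy).
  by case: (j == k); rewrite ?embed0.
rewrite big_ord_recr big_ord1 /= /coord /embed /=.
case: (decP v); case: (dec v) => [[x y] [x' y']] /= Hxy Hxy' ->.
by rewrite (dec_fst Hxy) (dec_fst Hxy').
Qed.

End TwinMatrixUnits.

Lemma infinite_dim_matrix_units (F : fieldType) (V : lmodType F) : infinite_dim V ->
  exists e : 'I_2 -> 'I_2 -> {linear V -> V},
    (forall i j k l v, e i j (e k l v) = if j == k then e i l v else 0) /\
    (forall v, \sum_i e i i v = v).
Proof.
move=> /infinite_dim_free_seq [c /exists_twin_cover [K [c' [K_twin K00 free_c' K_covers]]]].
have [H [H_twin H_covers]] := exists_twin_decomposition K_twin K00 free_c' K_covers.
have /choice [dec decP] : forall v, exists t : (V * V) * (V * V),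
    [/\ H t.1, H t.2 & v = t.1.1 + t.2.2].
  move=> v; have [x [y [x' [y' [_ [Hxy Hxy' -> ->]]]]]] := H_covers v.
  by exists ((x, y), (x', y')); rewrite addr0.
exact: (twin_matrix_units H_twin decP).
Qed.

Theorem proposition1 (F : fieldType) (V : lmodType F) (l : F)
  (p1 p2 p3 : {poly F}) :
  infinite_dim V ->
  split_poly p1 -> split_poly p2 -> split_poly p3 ->
  size p1 = 3%N -> size p2 = 3%N -> size p3 = 3%N ->
  (endo_sum3 p1 p2 p3 (fun v : V => l *: v) <->
   (scalar_sum3 p1 p2 p3 l \/
    2%:R * l = poly_tr p1 + poly_tr p2 + poly_tr p3)).
Proof.
move=> V_inf sp1 sp2 sp3 s1 s2 s3.
have [c1 [a1 [b1 [c1_neq0 ->]]]] := split_poly_size3 sp1 s1.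
have [c2 [a2 [b2 [c2_neq0 ->]]]] := split_poly_size3 sp2 s2.
have [c3 [a3 [b3 [c3_neq0 ->]]]] := split_poly_size3 sp3 s3.
rewrite endo_sum3Z // scalar_sum3Z // !poly_trZ // !poly_tr_XsubC2.
split=> [[u1 [u2 [u3 [[u1_lin u2_lin u3_lin] [[u1_ann u2_ann u3_ann] u_sum]]]]] | [scal | tr]].
- have [v v_neq0] := infinite_dim_exists_neq0 V_inf.
  exact: (@quadratic_sum_necessary _ _ (linmap u1_lin) (linmap u2_lin) (linmap u3_lin)
            _ _ _ _ _ _ _ v v_neq0 u1_ann u2_ann u3_ann u_sum).
- exact: scalar_sum3_endo_sum3 scal.
- have [e [e_mul e_id]] := infinite_dim_matrix_units V_inf.
  exact: (matrix_units_endo_sum3 e_mul e_id tr).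
Qed.
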